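(* For every finite simple graph $G$, $$\vartheta(G)\;=\;\alpha_{\mathcal S}(G)\;=\;\inf_A\ \min\Big\{W_A(x)\ \Big|\ x\in\big[\lambda_{\min}(A)^{-1},\lambda_{\max}(A)^{-1}\big]\Big\},$$ where in the rightmost expression $A$ ranges over all real symmetric weighted adjacency matrices of $G$.
   Context: $G$ is a finite simple graph (undirected, no loops) with vertex set $\{1,\dots,n\}$. A (real symmetric) weighted adjacency matrix of $G$ is a real symmetric $n\times n$ matrix $A$ with $A_{ij}=0$ whenever $i\neq j$ are non-adjacent and $A_{ii}=0$ for all $i$. $\boldsymbol 1$ is the all-ones vector, $J=\boldsymbol 1\boldsymbol 1^T$, $\langle\cdot,\cdot\rangle$ the standard inner product. $\vartheta(G)$ is the Lovász theta function, which may be taken as $\vartheta(G)=\inf_B\lambda_{\max}(B)$ over real symmetric $B$ with $B_{ij}=1$ whenever $i=j$ or $i,j$ are non-adjacent. Let $\mathcal S_n=\{\boldsymbol v\in\mathbb R^n: \langle \boldsymbol 1,\boldsymbol v\rangle=|\boldsymbol v|^2\}=\{\boldsymbol v: |\boldsymbol v-\tfrac12\boldsymbol 1|^2=n/4\}$. The spherical independence number is $\alpha_{\mathcal S}(G)=\inf_A\sup\{|\boldsymbol v|^2:\boldsymbol v\in\mathcal S_n,\ \langle \boldsymbol v,A\boldsymbol v\rangle=0\}$, with $A$ over real symmetric weighted adjacency matrices of $G$. For such $A$ with spectral decomposition $A=\sum_{\lambda\in\sigma(A)}\lambda P_\lambda$ ($P_\lambda$ the orthogonal projection onto the $\lambda$-eigenspace),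 the weighted walk-generating function is $W_A(x)=\langle\boldsymbol 1,(I-xA)^{-1}\boldsymbol 1\rangle=\sum_{\lambda\in\sigma(A)}\frac{\langle\boldsymbol 1,P_\lambda\boldsymbol 1\rangle}{1-\lambda x}$; terms with $\langle\boldsymbol 1,P_\lambda\boldsymbol 1\rangle=0$ are omitted, so that $W_A(\lambda^{-1})$ is defined in that case, and at an endpoint $x=\lambda^{-1}$ with $\langle\boldsymbol 1,P_\lambda\boldsymbol 1\rangle>0$ the value is $+\infty$. $\lambda_{\min}(A),\lambda_{\max}(A)$ are the smallest and largest eigenvalues of $A$ (strictly negative and positive when $A\ne0$); when $A=0$ the inner minimum is taken to equal $n$ (interpreting the interval as $(-\infty,+\infty)$). *)

From HB Require Import structures.
From mathcomp Require Import all_boot all_order all_algebra.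
From mathcomp Require Import boolp classical_sets fsbigop reals ereal.
Set Implicit Arguments. Unset Strict Implicit. Unset Printing Implicit Defensive.
Import Order.TTheory GRing.Theory Num.Theory.
Local Open Scope ring_scope.
Local Open Scope classical_set_scope.

Section Defs.
Variable R : realType.
Variable n : nat.

Definition ones : 'cV[R]_n := const_mx 1.
Definition inner (u v : 'cV[R]_n) : R := (u^T *m v) 0 0.
Definition sqnorm (v : 'cV[R]_n) : R := inner v v.

Definition is_wadj (e : rel 'I_n) (A : 'M[R]_n) : Prop :=
  A^T = A /\ (forall i, A i i = 0) /\ (forall i j, i != j -> ~~ e i j -> A i j = 0).

Definition is_theta_feasible (e : rel 'I_n) (B : 'M[R]_n) : Prop :=
  B^T = B /\ (forall i j, (i == j) || ~~ e i j -> B i j = 1).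

Definition spectrum (A : 'M[R]_n) : set R := [set l | eigenvalue A l].
Definition lambda_max (A : 'M[R]_n) : R := sup (spectrum A).
Definition lambda_min (A : 'M[R]_n) : R := inf (spectrum A).

Definition theta (e : rel 'I_n) : R :=
  inf [set lambda_max B | B in is_theta_feasible e].

Definition Sn : set 'cV[R]_n := [set v | inner ones v = sqnorm v].

Definition alphaS (e : rel 'I_n) : R :=
  inf [set sup [set sqnorm v | v in [set v | Sn v /\ inner v (A *m v) = 0]]
      | A in is_wadj e].

Definition is_eig_proj (A : 'M[R]_n) (l : R) (P : 'M[R]_n) : Prop :=
  P^T = P /\ P *m P = P /\ (forall v : 'cV[R]_n, P *m v = v <-> A *m v = l *: v).

Definition eig_proj (A : 'M[R]_n) (l : R) : 'M[R]_n := xget 0 (is_eig_proj A l).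

Definition spec_coef (A : 'M[R]_n) (l : R) : R := inner ones (eig_proj A l *m ones).

(* weighted walk-generating function via the spectral decomposition,
   with the conventions of the paper (terms with zero coefficient omitted,
   +oo at a pole with positive coefficient) *)
Definition wwgf (A : 'M[R]_n) (x : R) : \bar R :=
  if `[< exists l, [/\ spectrum A l, 0 < spec_coef A l & 1 - l * x = 0] >]
  then +oo%E
  else (\sum_(l \in [set l | spectrum A l /\ spec_coef A l != 0])
          spec_coef A l / (1 - l * x))%:E.

Definition wint (A : 'M[R]_n) : set R :=
  [set x | (lambda_min A)^-1 <= x <= (lambda_max A)^-1].

(* inner minimum (written as an infimum; attainment is asserted separately),
   equal to n when A = 0 *)
Definition wmin (A : 'M[R]_n) : \bar R :=
  if A == 0 then (n%:R)%:E else ereal_inf [set wwgf A x | x in wint A].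

Definition walk_value (e : rel 'I_n) : \bar R :=
  ereal_inf [set wmin A | A in is_wadj e].

End Defs.

(* A real symmetric matrix A has real eigenvalues, so a square-free product of
   factors X - l annihilates it and the Lagrange interpolation polynomials in A
   give its spectral resolution A = sum_l l P_l; this yields the Rayleigh bounds
   and the walk-generating function W_A(x) = <1, y> with (I - x A) y = 1.
   For a weighted adjacency matrix A, write a(A) for the supremum of |v|^2 over
   the v in S_n with <v, A v> = 0; by scaling, <1, v>^2 <= a(A) |v|^2 whenever
   <v, A v> = 0, and since A is indefinite, Finsler's lemma produces mu with
   <1, v>^2 <= a(A) |v|^2 + mu <v, A v> for all v.  Hence J - mu A is feasible
   for theta with largest eigenvalue at most a(A), while for feasible B the
   matrix B - J is a weighted adjacency matrix with a(B - J) <= lambda_max(B);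
   so theta = alpha_S.  With x = - mu / a(A) the same inequality reads
   <1, v>^2 <= a(A) <v, (I - x A) v>: tested on eigenvectors it puts x in
   [lambda_min^-1, lambda_max^-1], and tested on y it gives W_A(x) <= a(A).
   Conversely, on that interval I - x A is positive semidefinite and
   Cauchy-Schwarz for it gives a(A) <= W_A(x). *)

From HB Require Import structures.
From mathcomp Require Import all_boot all_order all_algebra.
From mathcomp Require Import boolp classical_sets fsbigop reals ereal.
From mathcomp Require Import complex ring lra.
Set Implicit Arguments. Unset Strict Implicit. Unset Printing Implicit Defensive.
Import Order.TTheory GRing.Theory Num.Theory.
Local Open Scope ring_scope.
Local Open Scope classical_set_scope.

Section SymmetricSpectrumReal.
Variable R : rcfType.
Local Notation C := (complex R).

Lemma rV_dotJ_eq0 n (v : 'rV[C]_n) :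
  ((v *m (map_mx conjc v)^T) 0 0 == 0) = (v == 0).
Proof.
rewrite mxE (eq_bigr (fun j => v 0 j * (v 0 j)^*%C)); last by move=> j _; rewrite !mxE.
rewrite psumr_eq0; last by move=> j _; exact: mulcJ_ge0.
apply/allP/eqP => [v0|-> j _]; last by rewrite mxE mulf_eq0 eqxx.
apply/rowP => j; have /implyP := v0 j (mem_index_enum j).
by rewrite mulf_eq0 conjc_eq0 orbb mxE => /(_ isT)/eqP.
Qed.

Lemma sym_char_poly_root_real n (A : 'M[R]_n) (z : C) : A^T = A ->
  root (char_poly (map_mx (real_complex R) A)) z -> complex.Im z = 0.
Proof.
move=> sA; rewrite -eigenvalue_root_char => /eigenvalueP [v Av v0].
(* As A is real symmetric, v A = z v gives z (v v^*T) = v A v^*T = z^* (v v^*T). *)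
set AC := map_mx (real_complex R) A in Av.
have ACJ : map_mx conjc AC = AC by apply/matrixP => i j; rewrite !mxE conjc_real.
have ACT : AC^T = AC by rewrite map_trmx sA.
set w := map_mx conjc v.
have Aw : AC *m w^T = z^*%C *: w^T.
  by rewrite -ACT -trmx_mul -ACJ -map_mxM Av map_mxZ linearZ.
have /eqP : z *: (v *m w^T) = z^*%C *: (v *m w^T).
  by rewrite scalemxAl -Av -mulmxA Aw -scalemxAr.
rewrite -subr_eq0 -scalerBl scaler_eq0 subr_eq0 => /orP[|vw0].
  by case: z {Av Aw} => a b; rewrite eq_complex /= => /andP[_ /eqP]; lra.
by move: v0; rewrite -rV_dotJ_eq0; have /eqP -> := vw0; rewrite mxE eqxx.
Qed.

Lemma sym_char_poly_split n (A : 'M[R]_n) : A^T = A ->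
  exists rs : seq R, char_poly A = \prod_(x <- rs) ('X - x%:P).
Proof.
move=> sA; have [r Hr] := closed_field_poly_normal (char_poly (map_mx (real_complex R) A)).
rewrite (monicP (char_poly_monic _)) scale1r in Hr.
exists (map (@complex.Re R) r); apply: (@map_poly_inj _ _ (real_complex R)).
rewrite map_char_poly Hr rmorph_prod big_map; apply: eq_big_seq => z zr.
rewrite rmorphB /= map_polyX map_polyC /=; congr (_ - _%:P).
have : root (char_poly (map_mx (real_complex R) A)) z by rewrite Hr root_prod_XsubC.
by move/(sym_char_poly_root_real sA); case: z {zr} => a b /= ->.
Qed.

End SymmetricSpectrumReal.

Lemma trmx_mul_self_eq0 (R : realDomainType) m n (N : 'M[R]_(m, n)) :
  N^T *m N = 0 -> N = 0.
Proof.
move=> /matrixP NN0; apply/matrixP => i j; rewrite mxE.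
have /eqP := NN0 j j; rewrite !mxE (eq_bigr (fun k => N k j ^+ 2)) => [|k _]; last first.
  by rewrite mxE expr2.
rewrite psumr_eq0 => [/allP/(_ i (mem_index_enum i))|k _]; last exact: sqr_ge0.
by rewrite sqrf_eq0 => /eqP.
Qed.

Section HornerMx.
Variables (R : comNzRingType) (n' : nat).
Local Notation n := n'.+1.
Variable A : 'M[R]_n.

Lemma horner_mx_eigen k (W : 'M[R]_(n, k)) l p : A *m W = l *: W ->
  horner_mx A p *m W = p.[l] *: W.
Proof.
move=> AW; elim/poly_ind: p => [|p c IH]; first by rewrite rmorph0 horner0 mul0mx scale0r.
rewrite rmorphD rmorphM /= horner_mx_X horner_mx_C hornerMXaddC mulmxDl -mulmxE.
by rewrite -mulmxA AW -scalemxAr IH scalerA mul_scalar_mx scalerDl mulrC.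
Qed.

Lemma trmx_horner_mx p : A^T = A -> (horner_mx A p)^T = horner_mx A p.
Proof.
move=> sA; elim/poly_ind: p => [|p c IH]; first by rewrite rmorph0 trmx0.
rewrite rmorphD rmorphM /= horner_mx_X horner_mx_C linearD /= tr_scalar_mx.
by rewrite -mulmxE trmx_mul IH sA (comm_horner_mx p (comm_mx_refl A)).
Qed.

End HornerMx.

Section SquareFreeAnnihilator.
Variables (R : realDomainType) (n' : nat).
Local Notation n := n'.+1.
Variable A : 'M[R]_n.
Hypothesis sA : A^T = A.

(* N^T N = 0 forces N = 0, so repeated root factors of an annihilating
   polynomial of a symmetric matrix can be dropped. *)
Lemma horner_mx_XsubC_sqr l p : horner_mx A (('X - l%:P) ^+ 2 * p) = 0 ->
  horner_mx A (('X - l%:P) * p) = 0.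
Proof.
move=> H; apply: trmx_mul_self_eq0; rewrite trmx_horner_mx // mulmxE -rmorphM /=.
by rewrite mulrACA -expr2 mulrA rmorphM /= H mul0r.
Qed.

Lemma horner_mx_prod_undup s c : horner_mx A (c * \prod_(x <- s) ('X - x%:P)) = 0 ->
  horner_mx A (c * \prod_(x <- undup s) ('X - x%:P)) = 0.
Proof.
elim: s c => [//|x s IH] c /=; rewrite big_cons; case: ifP => xs; last first.
  by rewrite big_cons !mulrA => /IH.
rewrite (perm_big _ (perm_to_rem xs)) big_cons /= => H; apply: IH.
rewrite (perm_big _ (perm_to_rem xs)) big_cons mulrCA; apply: horner_mx_XsubC_sqr.
by rewrite -H; congr (horner_mx A _); ring.
Qed.

End SquareFreeAnnihilator.

Lemma sym_annihilating_roots (R : rcfType) n' (A : 'M[R]_n'.+1) : A^T = A ->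
  exists L : seq R,
  [/\ uniq L, horner_mx A (\prod_(x <- L) ('X - x%:P)) = 0
    & forall l, eigenvalue A l = (l \in L)].
Proof.
move=> sA.
have [rs char_rs] := sym_char_poly_split sA.
have := Cayley_Hamilton A; rewrite char_rs -[X in horner_mx A X]mul1r.
move=> /(horner_mx_prod_undup sA); rewrite mul1r => undup0.
exists (undup rs); split => [||l]; [exact: undup_uniq | exact: undup0 |].
by rewrite eigenvalue_root_char char_rs root_prod_XsubC mem_undup.
Qed.

Section LagrangeBasis.
Variable F : fieldType.
Variable L : seq F.
Hypothesis uL : uniq L.

Definition lagrange_basis (l : F) : {poly F} :=
  (\prod_(m <- L | m != l) (l - m))^-1 *: \prod_(m <- L | m != l) ('X - m%:P).

Lemma lagrange_basis_eval l m : l \in L -> m \in L ->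
  (lagrange_basis l).[m] = (m == l)%:R.
Proof.
move=> lL mL; rewrite hornerZ horner_prod; under [X in _ * X]eq_bigr do rewrite hornerXsubC.
have [->|ml] := eqVneq m l.
  by rewrite mulVf // prodf_seq_neq0; apply/allP => k _; rewrite subr_eq0 eq_sym implybb.
by rewrite [X in _ * X]big_mkcond (bigD1_seq m) //= ml subrr mul0r mulr0.
Qed.

Lemma size_lagrange_basis l : l \in L -> (size (lagrange_basis l) <= size L)%N.
Proof.
move=> lL; apply: leq_trans (size_scale_leq _ _) _.
by rewrite -big_filter size_prod_XsubC -rem_filter // size_rem //; case: (L) lL.
Qed.

Lemma sum_lagrange_basis : L != [::] -> \sum_(l <- L) lagrange_basis l = 1.
Proof.
move=> L0; apply/eqP; rewrite -subr_eq0; apply/negPn/negP => D0.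
set D := _ - 1 in D0.
have rootD : all (root D) L.
  apply/allP => m mL; rewrite /root hornerD hornerN horner_sum hornerC.
  rewrite (eq_big_seq (fun l => (m == l)%:R)) => [|l lL]; last exact: lagrange_basis_eval.
  rewrite (bigD1_seq m) //= eqxx big1 ?addr0 ?subrr // => l.
  by rewrite eq_sym => /negPf ->.
have sizeD : (size D <= size L)%N.
  rewrite (leq_trans (size_polyD _ _)) // geq_max size_polyN size_poly1 lt0n size_eq0 L0 andbT.
  rewrite big_seq; apply: (big_ind (fun p : {poly F} => size p <= size L)%N).
  - by rewrite size_poly0.
  - by move=> p q sp sq; rewrite (leq_trans (size_polyD _ _)) // geq_max sp sq.
  - exact: size_lagrange_basis.
by have := max_poly_roots D0 rootD uL; rewrite ltnNge sizeD.
Qed.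

Lemma XsubC_lagrange_basis l : l \in L ->
  ('X - l%:P) * lagrange_basis l =
  (\prod_(m <- L | m != l) (l - m))^-1 *: \prod_(m <- L) ('X - m%:P).
Proof. by move=> lL; rewrite -scalerAr (bigD1_seq l). Qed.

End LagrangeBasis.

Section LagrangeProjector.
Variables (F : fieldType) (n' : nat).
Local Notation n := n'.+1.
Variable A : 'M[F]_n.
Variable L : seq F.
Hypothesis uL : uniq L.
Hypothesis annL : horner_mx A (\prod_(x <- L) ('X - x%:P)) = 0.

Definition lagrange_proj (l : F) : 'M[F]_n := horner_mx A (lagrange_basis L l).

Lemma mul_lagrange_proj l : l \in L -> A *m lagrange_proj l = l *: lagrange_proj l.
Proof.
move=> lL; apply/eqP; rewrite -subr_eq0 -mul_scalar_mx -mulmxBl.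
have : horner_mx A (('X - l%:P) * lagrange_basis L l) = 0.
  by rewrite XsubC_lagrange_basis // linearZ /= annL scaler0.
by rewrite rmorphM /= rmorphB /= horner_mx_X horner_mx_C mulmxE => ->.
Qed.

Lemma lagrange_proj_idem l : l \in L -> lagrange_proj l *m lagrange_proj l = lagrange_proj l.
Proof.
move=> lL; rewrite {1}/lagrange_proj (horner_mx_eigen _ (mul_lagrange_proj lL)).
by rewrite lagrange_basis_eval // eqxx scale1r.
Qed.

Lemma lagrange_proj_fixP l (v : 'cV[F]_n) : l \in L ->
  lagrange_proj l *m v = v <-> A *m v = l *: v.
Proof.
move=> lL; split => [<-|Av]; first by rewrite mulmxA mul_lagrange_proj // scalemxAl.
by rewrite /lagrange_proj (horner_mx_eigen _ Av) lagrange_basis_eval // eqxx scale1r.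
Qed.

Lemma sum_lagrange_proj : \sum_(l <- L) lagrange_proj l = 1%:M.
Proof.
have L0 : L != [::].
  by apply: contra_eqN annL => /eqP->; rewrite big_nil rmorph1 oner_neq0.
by rewrite -rmorph_sum /= sum_lagrange_basis // rmorph1.
Qed.

End LagrangeProjector.

Section InnerProduct.
Variables (R : realType) (n : nat).
Implicit Types (u v w : 'cV[R]_n) (M : 'M[R]_n).
Local Notation one := (ones R n).

Lemma innerE u v : inner u v = \sum_i u i 0 * v i 0.
Proof. by rewrite /inner mxE; apply: eq_bigr => i _; rewrite mxE. Qed.

Lemma innerC u v : inner u v = inner v u.
Proof. by rewrite !innerE; apply: eq_bigr => i _; rewrite mulrC. Qed.

Lemma inner_is_scalar u : scalar (inner u : 'cV[R]_n -> R).
Proof. by move=> a v w; rewrite /inner mulmxDr -scalemxAr !mxE. Qed.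

HB.instance Definition _ u :=
  GRing.isLinear.Build R 'cV[R]_n R _ (inner u) (inner_is_scalar u).

Lemma innerZl a u v : inner (a *: u) v = a * inner u v.
Proof. by rewrite innerC linearZ innerC. Qed.

Lemma inner_mulmx u M v : inner u (M *m v) = inner (M^T *m u) v.
Proof. by rewrite /inner trmx_mul trmxK mulmxA. Qed.

Lemma sqnorm_ge0 v : 0 <= sqnorm v.
Proof. by rewrite /sqnorm innerE sumr_ge0 // => i _; rewrite -expr2 sqr_ge0. Qed.

Lemma sqnorm_eq0 v : (sqnorm v == 0) = (v == 0).
Proof.
apply/eqP/eqP => [v0|->]; last by rewrite /sqnorm linear0.
by apply: trmx_mul_self_eq0; apply/matrixP => i j; rewrite !ord1 [LHS]v0 mxE.
Qed.

Lemma inner_affine a b M v :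
  inner v ((a%:M + b *: M) *m v) = a * sqnorm v + b * inner v (M *m v).
Proof. by rewrite mulmxDl mul_scalar_mx -scalemxAl !linearD !linearZ. Qed.

Lemma sqnorm_gt0 v : v != 0 -> 0 < sqnorm v.
Proof. by move=> v0; rewrite lt_def sqnorm_eq0 v0 sqnorm_ge0. Qed.

Lemma sqnorm_ones : sqnorm one = n%:R.
Proof.
rewrite /sqnorm innerE (eq_bigr (fun=> 1)) ?sumr_const ?card_ord // => i _.
by rewrite !mxE mulr1.
Qed.

Lemma inner_const_mx1 v : inner v (const_mx 1 *m v) = inner one v ^+ 2.
Proof.
have -> : const_mx 1 *m v = inner one v *: one.
  by apply/colP => i; rewrite !mxE innerE mulr1; apply: eq_bigr => k _; rewrite !mxE.
by rewrite linearZ /= innerC expr2.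
Qed.

Lemma inner_delta M (i j : 'I_n) : inner (delta_mx i 0) (M *m delta_mx j 0) = M i j.
Proof.
rewrite innerE (bigD1 i) //= big1 => [|k /negPf ki]; last by rewrite mxE ki mul0r.
rewrite mxE !eqxx mul1r addr0 mxE (bigD1 j) //= big1 => [|k /negPf kj]; last first.
  by rewrite mxE kj mulr0.
by rewrite mxE !eqxx mulr1 addr0.
Qed.

Lemma sqnorm_delta (i : 'I_n) : sqnorm (delta_mx i 0 : 'cV[R]_n) = 1.
Proof. by rewrite /sqnorm -[X in inner _ X]mul1mx inner_delta mxE eqxx. Qed.

Lemma inner_ones_delta (i : 'I_n) : inner one (delta_mx i 0) = 1.
Proof.
rewrite innerE (bigD1 i) //= big1 => [|k /negPf ki]; last by rewrite !mxE ki mulr0.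
by rewrite !mxE !eqxx mulr1 addr0.
Qed.

End InnerProduct.

Lemma eq_mx_mulcV (F : fieldType) m n (M M' : 'M[F]_(m, n)) :
  (forall v : 'cV_n, M *m v = M' *m v) -> M = M'.
Proof. by move=> MM'; apply/trmx_inj/eqP/mulmxP => u; rewrite -[u]trmxK -!trmx_mul MM'. Qed.

Section EigenProjection.
Variables (R : realType) (n : nat).
Variable A : 'M[R]_n.

Lemma is_eig_proj_unique l P P' : is_eig_proj A l P -> is_eig_proj A l P' -> P = P'.
Proof.
have fixed Q Q' : is_eig_proj A l Q -> is_eig_proj A l Q' -> Q' *m Q = Q.
  move=> [_ [QQ fixQ]] [_ [_ fixQ']]; apply: eq_mx_mulcV => v.
  by rewrite -mulmxA; apply/fixQ'/fixQ; rewrite mulmxA QQ.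
move=> eP eP'; have [PT _] := eP; have [P'T _] := eP'.
by rewrite -PT -(fixed _ _ eP eP') trmx_mul PT P'T fixed.
Qed.

Lemma eig_projE l P : is_eig_proj A l P -> eig_proj A l = P.
Proof. by move=> eP; apply: (is_eig_proj_unique _ eP); apply: xgetPex; exists P. Qed.

End EigenProjection.

Record spectral_resolution (R : realType) n (A : 'M[R]_n) (L : seq R) : Prop :=
  SpectralResolution {
    spec_res_uniq : uniq L;
    spec_res_spectrum : forall l, spectrum A l <-> l \in L;
    spec_res_sum : \sum_(l <- L) eig_proj A l = 1%:M;
    spec_res_eig_proj : {in L, forall l, is_eig_proj A l (eig_proj A l)} }.

Lemma sym_spectral_resolution (R : realType) n' (A : 'M[R]_n'.+1) :
  A^T = A -> exists L, spectral_resolution A L.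
Proof.
move=> sA; have [L [uL annL eigL]] := sym_annihilating_roots sA.
have projL l : l \in L -> is_eig_proj A l (lagrange_proj A L l).
  move=> lL; split; first exact: trmx_horner_mx.
  by split=> [|v]; [exact: lagrange_proj_idem | exact: lagrange_proj_fixP].
exists L; split=> //.
- by move=> l; rewrite /spectrum /= eigL.
- rewrite -(sum_lagrange_proj uL annL) !big_seq; apply: eq_bigr => l lL.
  exact/eig_projE/projL.
- by move=> l lL; rewrite (eig_projE (projL l lL)); exact: projL.
Qed.

Section RealQuadratics.
Variable R : realFieldType.

Lemma sqr_le_of_quad_ge0 (a b c : R) : 0 <= c ->
  (forall t, 0 <= a - 2 * t * b + t ^+ 2 * c) -> b ^+ 2 <= a * c.
Proof.
move=> c_ge0 quad_ge0; have [c_gt0|c_le0] := ltP 0 c.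
  have := quad_ge0 (b / c).
  have -> : a - 2 * (b / c) * b + (b / c) ^+ 2 * c = (a * c - b ^+ 2) / c.
    by field; rewrite gt_eqF.
  by rewrite pmulr_lge0 ?invr_gt0 // subr_ge0.
have c0 : c = 0 by apply/le_anti/andP.
have [b0|b_neq0] := eqVneq b 0; first by rewrite b0 c0 expr0n mulr0.
have := quad_ge0 ((a + 1) / (2 * b)).
have -> : a - 2 * ((a + 1) / (2 * b)) * b + ((a + 1) / (2 * b)) ^+ 2 * c = -1.
  by rewrite c0 mulr0 addr0; field.
by rewrite ler0N1.
Qed.

Lemma quad_ge0_at_opposite (p m r s1 s2 : R) : s1 < 0 < s2 ->
  0 <= p - 2 * s1 * m + s1 ^+ 2 * r -> 0 <= p - 2 * s2 * m + s2 ^+ 2 * r ->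
  0 <= p - r * (s1 * s2).
Proof.
move=> /andP[s1_lt0 s2_gt0] q1 q2.
have : 0 <= (s2 - s1) * (p - r * (s1 * s2)).
  have -> : (s2 - s1) * (p - r * (s1 * s2)) =
    s2 * (p - 2 * s1 * m + s1 ^+ 2 * r) + (- s1) * (p - 2 * s2 * m + s2 ^+ 2 * r) by ring.
  by rewrite addr_ge0 // mulr_ge0 // ?oppr_ge0 ltW.
by rewrite pmulr_rge0 // subr_gt0 (lt_trans s1_lt0).
Qed.

End RealQuadratics.

Lemma quad_opposite_roots (R : rcfType) (a b c : R) : 0 < a -> c < 0 ->
  exists s1 s2 : R, [/\ s1 < 0 < s2, s1 * s2 = a / c,
    a - 2 * s1 * b + s1 ^+ 2 * c = 0 & a - 2 * s2 * b + s2 ^+ 2 * c = 0].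
Proof.
move=> a_gt0 c_lt0; set D := b ^+ 2 - a * c.
have D_gt0 : 0 < D by rewrite subr_gt0 (lt_le_trans _ (sqr_ge0 b)) // pmulr_rlt0.
set d := Num.sqrt D; have d2 : d ^+ 2 = D by rewrite sqr_sqrtr // ltW.
have d_gt0 : 0 < d by rewrite sqrtr_gt0.
have c_neq0 : c != 0 by rewrite lt_eqF.
have root_s d' : d' ^+ 2 = D -> a - 2 * ((b + d') / c) * b + ((b + d') / c) ^+ 2 * c = 0.
  by move=> d'2; rewrite -[RHS](mul0r c^-1) -(subrr D) -{1}d'2 /D; field.
have ac_lt0 : a * c < 0 by rewrite pmulr_rlt0.
have sqr_db : d ^+ 2 - b ^+ 2 = - (a * c) by rewrite d2 /D; ring.
have bd_gt0 : 0 < b + d by nra.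
have bd_lt0 : b - d < 0 by nra.
exists ((b + d) / c), ((b - d) / c); split.
- by rewrite pmulr_rlt0 // invr_lt0 nmulr_rgt0 // invr_lt0 c_lt0.
- have -> : (b + d) / c * ((b - d) / c) = (b ^+ 2 - d ^+ 2) / c ^+ 2 by field.
  by rewrite d2 /D; field.
- exact: root_s.
- by rewrite -[b - d]/(b + - d); apply: root_s; rewrite sqrrN.
Qed.

Section QuadraticForms.
Variables (R : realType) (n : nat).
Implicit Types (u v w : 'cV[R]_n) (M : 'M[R]_n).

Lemma quad_form_subZ M u v t : M^T = M ->
  inner (v - t *: u) (M *m (v - t *: u)) =
  inner v (M *m v) - 2 * t * inner u (M *m v) + t ^+ 2 * inner u (M *m u).
Proof.
move=> sM; have symM x y : inner x (M *m y) = inner y (M *m x).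
  by rewrite inner_mulmx sM innerC.
have expand x : inner x (M *m (v - t *: u)) = inner x (M *m v) - t * inner x (M *m u).
  by rewrite mulmxBr -scalemxAr linearB linearZ.
by rewrite expand !(symM (v - t *: u)) !expand (symM v u); ring.
Qed.

Lemma psd_cauchy_schwarz M u v : M^T = M -> (forall w, 0 <= inner w (M *m w)) ->
  inner u (M *m v) ^+ 2 <= inner u (M *m u) * inner v (M *m v).
Proof.
move=> sM psdM; rewrite mulrC; apply: sqr_le_of_quad_ge0 => [|t]; first exact: psdM.
by rewrite -quad_form_subZ.
Qed.

End QuadraticForms.

Section Finsler.
Variables (R : realType) (n : nat).
Variables A Q : 'M[R]_n.
Hypotheses (sA : A^T = A) (sQ : Q^T = Q).
Hypothesis Q_ge0_on_cone : forall v, inner v (A *m v) = 0 -> 0 <= inner v (Q *m v).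
Local Notation a v := (inner v (A *m v)).
Local Notation q v := (inner v (Q *m v)).

Lemma finsler_ratio_le u w : 0 < a u -> a w < 0 -> - q u / a u <= q w / - a w.
Proof.
(* a vanishes on the lines u - s w for two roots s1 < 0 < s2; q >= 0 there,
   and a positive combination of the two inequalities cancels the cross term. *)
move=> au_gt0 aw_lt0; set be := inner w (A *m u).
have [s1 [s2 [s12 prod_s ra1 ra2]]] := quad_opposite_roots be au_gt0 aw_lt0.
have q_ge0 s : a u - 2 * s * be + s ^+ 2 * a w = 0 ->
    0 <= q u - 2 * s * inner w (Q *m u) + s ^+ 2 * q w.
  by rewrite -!quad_form_subZ //; apply: Q_ge0_on_cone.
have := quad_ge0_at_opposite s12 (q_ge0 _ ra1) (q_ge0 _ ra2); rewrite prod_s => key.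
rewrite -subr_ge0.
have -> : q w / - a w - - q u / a u = (q u - q w * (a u / a w)) / a u.
  by field; rewrite gt_eqF ?lt_eqF.
by rewrite divr_ge0 // ltW.
Qed.

Lemma finsler : (exists u, 0 < a u) -> (exists w, a w < 0) ->
  exists mu, forall v, 0 <= q v + mu * a v.
Proof.
move=> [u0 au0] [w0 aw0]; set G := [set - q u / a u | u in [set u | 0 < a u]].
have G0 : G !=set0 by exists (- q u0 / a u0), u0.
have G_ub w : a w < 0 -> ubound G (q w / - a w).
  by move=> aw _ [u /= au <-]; exact: finsler_ratio_le.
have G_sup : has_sup G by split=> //; exists (q w0 / - a w0); exact: G_ub.
exists (sup G); move=> v; have [av|av|av] := ltgtP (a v) 0; last first.
- by rewrite av mulr0 addr0; apply: Q_ge0_on_cone.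
- have : - q v / a v <= sup G by apply: sup_upper_bound G_sup _ _; exists v.
  rewrite ler_pdivrMr //; lra.
- have := ge_sup G0 (G_ub v av); rewrite ler_pdivlMr ?oppr_gt0 // mulrN; lra.
Qed.

End Finsler.

Section SpectralResolution.
Variables (R : realType) (n' : nat).
Local Notation n := n'.+1.
Local Notation one := (ones R n).
Variables (A : 'M[R]_n) (L : seq R).
Hypothesis AL : spectral_resolution A L.
Local Notation E := (eig_proj A).

Lemma eig_proj_sym l : l \in L -> (E l)^T = E l.
Proof. by move=> /(spec_res_eig_proj AL) []. Qed.

Lemma eig_proj_idem l : l \in L -> E l *m E l = E l.
Proof. by move=> /(spec_res_eig_proj AL) [_ []]. Qed.

Lemma mul_eig_proj l : l \in L -> A *m E l = l *: E l.
Proof.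
move=> /(spec_res_eig_proj AL) [_ [EE fixE]].
by apply: eq_mx_mulcV => v; rewrite -scalemxAl -!mulmxA; apply/fixE; rewrite mulmxA EE.
Qed.

Lemma inner_eig_proj l v : l \in L -> inner v (E l *m v) = sqnorm (E l *m v).
Proof.
by move=> lL; rewrite /sqnorm [RHS]inner_mulmx eig_proj_sym // mulmxA eig_proj_idem // innerC.
Qed.

Lemma inner_eig_proj_ge0 l v : l \in L -> 0 <= inner v (E l *m v).
Proof. by move=> lL; rewrite inner_eig_proj // sqnorm_ge0. Qed.

Lemma spec_coef_ge0 l : l \in L -> 0 <= spec_coef A l.
Proof. exact: inner_eig_proj_ge0. Qed.

Lemma spec_coef_eq0 l : l \in L -> spec_coef A l = 0 -> E l *m one = 0.
Proof. by move=> lL /eqP; rewrite /spec_coef inner_eig_proj // sqnorm_eq0 => /eqP. Qed.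

Lemma sum_eig_proj_mulmx (v : 'cV[R]_n) : \sum_(l <- L) E l *m v = v.
Proof. by rewrite -mulmx_suml (spec_res_sum AL) mul1mx. Qed.

Lemma mul_affine_eig_proj a b l : l \in L ->
  (a%:M + b *: A) *m E l = (a + b * l) *: E l.
Proof.
by move=> lL; rewrite mulmxDl mul_scalar_mx -scalemxAl mul_eig_proj // scalerA -scalerDl.
Qed.

Lemma affine_eig_decomp a b : a%:M + b *: A = \sum_(l <- L) (a + b * l) *: E l.
Proof.
rewrite -[LHS]mulmx1 -(spec_res_sum AL) mulmx_sumr big_seq [RHS]big_seq.
by apply: eq_bigr => l lL; rewrite mul_affine_eig_proj.
Qed.

Lemma psd_affine a b (v : 'cV[R]_n) : {in L, forall l, 0 <= a + b * l} ->
  0 <= inner v ((a%:M + b *: A) *m v).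
Proof.
move=> abL; rewrite affine_eig_decomp mulmx_suml linear_sum big_seq sumr_ge0 // => l lL.
by rewrite -scalemxAl linearZ mulr_ge0 ?abL ?inner_eig_proj_ge0.
Qed.

Lemma spectral_resolution_neq0 : L != [::].
Proof.
apply: contra_eq_neq (spec_res_sum AL) => ->.
by rewrite big_nil -[1%:M]/(1 : 'M[R]_n) eq_sym oner_neq0.
Qed.

Lemma spectrum_has_sup : has_sup (spectrum A).
Proof.
have specL := spec_res_spectrum AL; split.
  case: L spectral_resolution_neq0 specL => // l s _ /(_ l) [_ /(_ (mem_head l s))].
  by exists l.
by exists (\big[Num.max/0]_(x <- L) x) => l /specL lL; apply: le_bigmax_seq.
Qed.

Lemma spectrum_has_lbound : has_lbound (spectrum A).
Proof.
by exists (\big[Num.min/0]_(x <- L) x) => l /(spec_res_spectrum AL) lL; apply: ge_bigmin_seq.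
Qed.

Lemma lambda_max_ge l : l \in L -> l <= lambda_max A.
Proof. by move=> /(spec_res_spectrum AL) Sl; apply: sup_upper_bound spectrum_has_sup _ Sl. Qed.

Lemma lambda_min_le l : l \in L -> lambda_min A <= l.
Proof. by move=> /(spec_res_spectrum AL) Sl; apply: ge_inf spectrum_has_lbound _ Sl. Qed.

Lemma rayleigh_max (v : 'cV[R]_n) : inner v (A *m v) <= lambda_max A * sqnorm v.
Proof.
have := @psd_affine (lambda_max A) (-1) v; rewrite inner_affine mulN1r subr_ge0.
by apply=> l /lambda_max_ge; rewrite mulN1r subr_ge0.
Qed.

Lemma rayleigh_min (v : 'cV[R]_n) : lambda_min A * sqnorm v <= inner v (A *m v).
Proof.
have := @psd_affine (- lambda_min A) 1 v; rewrite inner_affine mul1r mulNr addrC subr_ge0.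
by apply=> l /lambda_min_le; rewrite mul1r addrC subr_ge0.
Qed.

(* When 1 - l x = 0 the junk value 0^-1 = 0 drops the l-term; this is harmless
   as long as 1 has no component in that eigenspace. *)
Definition resolvent_one (x : R) : 'cV[R]_n :=
  \sum_(l <- L) (1 - l * x)^-1 *: (E l *m one).

Lemma mul_resolvent_one x :
  {in L, forall l, 0 < spec_coef A l -> 1 - l * x != 0} ->
  (1%:M - x *: A) *m resolvent_one x = one.
Proof.
move=> nz; rewrite -[RHS]sum_eig_proj_mulmx mulmx_sumr !big_seq; apply: eq_bigr => l lL.
rewrite -scalemxAr mulmxA -scaleNr mul_affine_eig_proj // -scalemxAl scalerA.
rewrite mulNr [x * l]mulrC; have [w0|/mulVf-> //] := eqVneq (1 - l * x) 0; last first.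
  by rewrite scale1r.
have cf0 : spec_coef A l = 0.
  apply/eqP; rewrite eq_le spec_coef_ge0 // andbT leNgt.
  by apply/negP => /(nz l lL); rewrite w0 eqxx.
by rewrite w0 mulr0 scale0r spec_coef_eq0.
Qed.

Lemma inner_one_resolvent x :
  inner one (resolvent_one x) = \sum_(l <- L) spec_coef A l / (1 - l * x).
Proof. by rewrite linear_sum; apply: eq_bigr => l _; rewrite linearZ /= mulrC. Qed.

Lemma wwgf_finE x : {in L, forall l, 0 < spec_coef A l -> 1 - l * x != 0} ->
  wwgf A x = (\sum_(l <- L) spec_coef A l / (1 - l * x))%:E.
Proof.
move=> nz; have specL := spec_res_spectrum AL; rewrite /wwgf asboolF; last first.
  by move=> [l [/specL lL cf_gt0 w0]]; move: (nz l lL cf_gt0); rewrite w0 eqxx.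
have -> : [set l | spectrum A l /\ spec_coef A l != 0] =
          [set` [seq l <- L | spec_coef A l != 0]].
  apply/seteqP; split => l /=; rewrite mem_filter; first by move=> [/specL -> ->].
  by move=> /andP[? /specL].
rewrite -fsbig_seq ?filter_uniq ?(spec_res_uniq AL) // big_filter big_mkcond /=.
by congr (_%:E); apply: eq_bigr => l _; case: eqP => // ->; rewrite mul0r.
Qed.

Lemma wwgf_poleE x l : l \in L -> 0 < spec_coef A l -> 1 - l * x = 0 -> wwgf A x = +oo%E.
Proof.
move=> lL cf_gt0 w0; rewrite /wwgf asboolT //.
by exists l; split=> //; apply/(spec_res_spectrum AL).
Qed.

Lemma affine_sym a b : (a%:M + b *: A)^T = a%:M + b *: A.
Proof.
rewrite affine_eig_decomp linear_sum; apply: eq_big_seq => l lL.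
by rewrite linearZ /= eig_proj_sym.
Qed.

Lemma sqr_inner_ones_le_resolvent x v :
  {in L, forall l, 0 <= 1 - l * x} ->
  {in L, forall l, 0 < spec_coef A l -> 1 - l * x != 0} ->
  inner one v ^+ 2 <=
    inner v ((1%:M - x *: A) *m v) * \sum_(l <- L) spec_coef A l / (1 - l * x).
Proof.
move=> ge0 nz; have MM : 1%:M - x *: A = 1%:M + (- x) *: A by rewrite scaleNr.
have sM : (1%:M - x *: A)^T = 1%:M - x *: A by rewrite MM affine_sym.
have psdM w : 0 <= inner w ((1%:M - x *: A) *m w).
  by rewrite MM psd_affine // => l /ge0; rewrite mulNr mulrC.
have := psd_cauchy_schwarz (resolvent_one x) v sM psdM.
rewrite -inner_one_resolvent inner_mulmx sM (mul_resolvent_one nz).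
by rewrite [inner _ one]innerC mulrC.
Qed.

Lemma resolvent_sum_ge0 x : {in L, forall l, 0 <= 1 - l * x} ->
  0 <= \sum_(l <- L) spec_coef A l / (1 - l * x).
Proof.
move=> ge0; rewrite big_seq sumr_ge0 // => l lL.
by rewrite divr_ge0 ?ge0 ?spec_coef_ge0.
Qed.

End SpectralResolution.

Section SymmetricRayleigh.
Variables (R : realType) (n' : nat).
Local Notation n := n'.+1.
Variable A : 'M[R]_n.
Hypothesis sA : A^T = A.

Lemma sym_rayleigh_max (v : 'cV[R]_n) : inner v (A *m v) <= lambda_max A * sqnorm v.
Proof. by have [L AL] := sym_spectral_resolution sA; exact: rayleigh_max AL v. Qed.

Lemma sym_rayleigh_min (v : 'cV[R]_n) : lambda_min A * sqnorm v <= inner v (A *m v).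
Proof. by have [L AL] := sym_spectral_resolution sA; exact: rayleigh_min AL v. Qed.

Lemma sym_eigenvector l : spectrum A l ->
  exists2 v : 'cV[R]_n, A *m v = l *: v & v != 0.
Proof.
move=> /eigenvalueP [u uA u0]; exists u^T; last by rewrite trmx_eq0.
by rewrite -[in LHS]sA -trmx_mul uA linearZ.
Qed.

Lemma lambda_max_le s : (forall v, inner v (A *m v) <= s * sqnorm v) ->
  lambda_max A <= s.
Proof.
have [L AL] := sym_spectral_resolution sA.
move=> Rs; apply: ge_sup; first by case: (spectrum_has_sup AL).
move=> l /sym_eigenvector [v Av v0]; have := Rs v.
by rewrite Av linearZ ler_pM2r // sqnorm_gt0.
Qed.

End SymmetricRayleigh.

Definition Sn_zero_cone (R : realType) n (A : 'M[R]_n) : set 'cV[R]_n :=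
  [set v | Sn v /\ inner v (A *m v) = 0].

Definition alphaS_mx (R : realType) n (A : 'M[R]_n) : R :=
  sup [set sqnorm v | v in Sn_zero_cone A].

Lemma Sn_zero_cone0 (R : realType) n (A : 'M[R]_n) : Sn_zero_cone A 0.
Proof. by split; rewrite /Sn /= /sqnorm ?mulmx0 !linear0. Qed.

Lemma wadj0 (R : realType) n (e : rel 'I_n) : is_wadj e (0 : 'M[R]_n).
Proof. by split; [rewrite trmx0 | split=> [i|i j _ _]; rewrite mxE]. Qed.

Lemma alphaSE (R : realType) n (e : rel 'I_n) :
  alphaS R e = inf [set alphaS_mx A | A in is_wadj e].
Proof. by []. Qed.

Section SphericalAlpha.
Variables (R : realType) (n' : nat).
Local Notation n := n'.+1.
Local Notation one := (ones R n).
Implicit Types (A : 'M[R]_n) (v : 'cV[R]_n).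

Lemma sqr_inner_ones_le v : inner one v ^+ 2 <= n%:R * sqnorm v.
Proof.
have psd1 (w : 'cV[R]_n) : 0 <= inner w (1%:M *m w) by rewrite mul1mx sqnorm_ge0.
have := psd_cauchy_schwarz one v (trmx1 _ _) psd1.
by rewrite !mul1mx -/(sqnorm one) sqnorm_ones.
Qed.

Lemma Sn_sqnorm_le v : Sn v -> sqnorm v <= n%:R.
Proof.
rewrite /Sn /= => Sv; have := sqr_inner_ones_le v; rewrite Sv.
have := sqnorm_ge0 v; have : (0 : R) <= n%:R by rewrite ler0n.
nra.
Qed.

Lemma alphaS_mx_has_sup A : has_sup [set sqnorm v | v in Sn_zero_cone A].
Proof.
split; first by exists (sqnorm (0 : 'cV[R]_n)), 0; first exact: Sn_zero_cone0.
by exists n%:R => _ [v [Sv _] <-]; apply: Sn_sqnorm_le.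
Qed.

Lemma sqnorm_le_alphaS_mx A v : Sn v -> inner v (A *m v) = 0 -> sqnorm v <= alphaS_mx A.
Proof. by move=> Sv Av0; apply: sup_upper_bound (alphaS_mx_has_sup A) _ _; exists v. Qed.

Lemma alphaS_mx_ge0 A : 0 <= alphaS_mx A.
Proof.
have [S0 A0] := Sn_zero_cone0 A.
exact: le_trans (sqnorm_ge0 0) (sqnorm_le_alphaS_mx S0 A0).
Qed.

Lemma alphaS_mx_le_dim A : alphaS_mx A <= n%:R.
Proof.
apply: ge_sup; first by case: (alphaS_mx_has_sup A).
by move=> _ [v [Sv _] <-]; apply: Sn_sqnorm_le.
Qed.

Lemma alphaS_mx0 : alphaS_mx (0 : 'M[R]_n) = n%:R.
Proof.
apply/le_anti; rewrite alphaS_mx_le_dim -sqnorm_ones sqnorm_le_alphaS_mx //.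
by rewrite mul0mx linear0.
Qed.

Lemma alphaS_mx_ge1 A : A ord0 ord0 = 0 -> 1 <= alphaS_mx A.
Proof.
move=> A00; rewrite -(@sqnorm_delta R n ord0) sqnorm_le_alphaS_mx ?inner_delta //.
by rewrite /Sn /= sqnorm_delta inner_ones_delta.
Qed.

Lemma sqr_inner_ones_le_alphaS A v : inner v (A *m v) = 0 ->
  inner one v ^+ 2 <= alphaS_mx A * sqnorm v.
Proof.
move=> Av0; have [->|v0] := eqVneq v 0; first by rewrite /sqnorm !linear0 expr0n mulr0.
have v_gt0 := sqnorm_gt0 v0; set c := inner one v / sqnorm v.
have Sc : Sn (c *: v).
  rewrite /Sn /= /sqnorm linearZ innerZl linearZ /= -/(sqnorm v) /c.
  by field; rewrite gt_eqF.
have Ac : inner (c *: v) (A *m (c *: v)) = 0.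
  by rewrite -scalemxAr linearZ /= innerZl Av0 !mulr0.
have := sqnorm_le_alphaS_mx Sc Ac; rewrite /sqnorm linearZ /= innerZl -/(sqnorm v).
have -> : inner one v ^+ 2 = c * (c * sqnorm v) * sqnorm v.
  by rewrite /c; field; rewrite gt_eqF.
by rewrite ler_pM2r.
Qed.

End SphericalAlpha.

Section ThetaAlpha.
Variables (R : realType) (n' : nat).
Local Notation n := n'.+1.
Local Notation one := (ones R n).
Local Notation J := (const_mx 1 : 'M[R]_n).
Variable e : rel 'I_n.
Implicit Types (A B : 'M[R]_n) (v : 'cV[R]_n).

Lemma wadj_sym A : is_wadj e A -> A^T = A.
Proof. by case. Qed.

Lemma wadj_indefinite A : is_wadj e A -> A != 0 ->
  (exists u, 0 < inner u (A *m u)) /\ (exists w, inner w (A *m w) < 0).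
Proof.
move=> [sA [A_diag _]] /matrix0Pn [i [j Aij]].
have quad t : inner (delta_mx i 0 - t *: delta_mx j 0)
                    (A *m (delta_mx i 0 - t *: delta_mx j 0)) = - 2 * t * A i j.
  have Aji : A j i = A i j by rewrite -[in LHS]sA mxE.
  by rewrite quad_form_subZ // !inner_delta !A_diag Aji; ring.
have Aij2 : 0 < A i j ^+ 2 by rewrite exprn_even_gt0.
split; [exists (delta_mx i 0 - (- A i j) *: delta_mx j 0) |
        exists (delta_mx i 0 - A i j *: delta_mx j 0)]; rewrite quad; nra.
Qed.

Lemma alphaS_mx_certificate A : is_wadj e A ->
  exists mu, forall v, inner one v ^+ 2 <= alphaS_mx A * sqnorm v + mu * inner v (A *m v).
Proof.
move=> wA; have sA := wadj_sym wA; have [->|A0] := eqVneq A 0.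
  by exists 0 => v; rewrite mul0r addr0 sqr_inner_ones_le_alphaS // mul0mx linear0.
set Q := alphaS_mx A *: 1%:M - J.
have sQ : Q^T = Q by rewrite linearB /= linearZ /= trmx1 trmx_const.
have qQ v : inner v (Q *m v) = alphaS_mx A * sqnorm v - inner one v ^+ 2.
  by rewrite mulmxBl -scalemxAl mul1mx linearB linearZ /= inner_const_mx1.
have [[u au] [w aw]] := wadj_indefinite wA A0.
have [|mu Hmu] := finsler sA sQ _ (ex_intro _ u au) (ex_intro _ w aw).
  by move=> v Av0; rewrite qQ subr_ge0 sqr_inner_ones_le_alphaS.
by exists mu => v; have := Hmu v; rewrite qQ; lra.
Qed.

Lemma theta_feasible_lambda_max_ge1 B : is_theta_feasible e B -> 1 <= lambda_max B.
Proof.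
move=> [sB B1]; have := sym_rayleigh_max sB (delta_mx ord0 0).
by rewrite inner_delta sqnorm_delta mulr1 B1 // eqxx.
Qed.

Lemma theta_set_has_lbound : has_lbound [set lambda_max B | B in @is_theta_feasible R n e].
Proof. by exists 1 => _ [B fB <-]; exact: theta_feasible_lambda_max_ge1. Qed.

Lemma theta_le_alphaS_mx A : is_wadj e A -> theta R e <= alphaS_mx A.
Proof.
move=> wA; have [mu Hmu] := alphaS_mx_certificate wA; have [sA [A_diag A_off]] := wA.
have fB : is_theta_feasible e (J - mu *: A).
  split=> [|i j]; first by rewrite linearB /= linearZ /= trmx_const sA.
  have [-> _|ij /= nij] := eqVneq i j; first by rewrite !mxE A_diag mulr0 subr0.
  by rewrite !mxE A_off // mulr0 subr0.
apply: le_trans (_ : lambda_max (J - mu *: A) <= _).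
  by apply: ge_inf theta_set_has_lbound _ _; exists (J - mu *: A).
apply: lambda_max_le; first by case: fB.
move=> v; have := Hmu v.
rewrite mulmxBl -scalemxAl linearB linearZ /= inner_const_mx1; lra.
Qed.

Lemma alphaS_mx_le_lambda_max B : is_theta_feasible e B -> alphaS_mx (B - J) <= lambda_max B.
Proof.
move=> fB; have [sB _] := fB; apply: ge_sup; first by case: (alphaS_mx_has_sup (B - J)).
move=> _ [v [Sv]] + <-; rewrite mulmxBl linearB /= inner_const_mx1 => /eqP.
rewrite subr_eq0 => /eqP BvJ.
have := sym_rayleigh_max sB v; rewrite BvJ Sv.
have := sqnorm_ge0 v; have := theta_feasible_lambda_max_ge1 fB; nra.
Qed.

Lemma theta_feasible_wadj_subJ B : is_theta_feasible e B -> is_wadj e (B - J).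
Proof.
move=> [sB B1]; split; first by rewrite linearB /= trmx_const sB.
split=> [i|i j _ nij]; rewrite !mxE B1 ?subrr //; first by rewrite eqxx.
by rewrite nij orbT.
Qed.

Lemma theta_eq_alphaS : theta R e = alphaS R e.
Proof.
rewrite alphaSE; apply/le_anti/andP; split.
  apply: lb_le_inf; first by exists (alphaS_mx (0 : 'M[R]_n)), 0; first exact: wadj0.
  by move=> _ [A wA <-]; exact: theta_le_alphaS_mx.
apply: lb_le_inf.
  by exists (lambda_max J), J => //; split=> [|i j _]; rewrite ?trmx_const ?mxE.
move=> _ [B fB <-]; apply: le_trans (alphaS_mx_le_lambda_max fB).
apply: ge_inf; last by exists (B - J) => //; exact: theta_feasible_wadj_subJ.
by exists 0 => _ [A _ <-]; exact: alphaS_mx_ge0.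
Qed.

End ThetaAlpha.

Lemma inv_inf_sup_bounds (R : realType) (S : set R) x :
  has_sup S -> has_lbound S -> inf S < 0 < sup S ->
  (inf S)^-1 <= x <= (sup S)^-1 <-> (forall l, S l -> l * x <= 1).
Proof.
move=> supS lbS /andP[inf_lt0 sup_gt0].
have im : inf S * (inf S)^-1 = 1 by rewrite mulfV // lt_eqF.
have iM : sup S * (sup S)^-1 = 1 by rewrite mulfV // gt_eqF.
have im_lt0 : (inf S)^-1 < 0 by rewrite invr_lt0.
have iM_gt0 : 0 < (sup S)^-1 by rewrite invr_gt0.
split=> [/andP[x_ge x_le] l Sl|lx1].
  have l_ge := ge_inf lbS Sl; have l_le := sup_upper_bound supS Sl.
  have [x_ge0|x_lt0] := leP 0 x; nra.
have [x_gt0|x_le0] := ltP 0 x.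
  have ix : x * x^-1 = 1 by rewrite mulfV // gt_eqF.
  have : sup S <= x^-1 by apply: ge_sup (proj1 supS) _ => l /lx1; nra.
  by move=> sup_le; apply/andP; split; nra.
have [x0|x_neq0] := eqVneq x 0; first by rewrite x0 ltW // ltW.
have x_lt0 : x < 0 by rewrite lt_neqAle x_neq0 x_le0.
have ix : x * x^-1 = 1 by rewrite mulfV.
have : x^-1 <= inf S by apply: lb_le_inf (proj1 supS) _ => l /lx1; nra.
by move=> inf_ge; apply/andP; split; nra.
Qed.

Section WalkGeneratingFunction.
Variables (R : realType) (n' : nat).
Local Notation n := n'.+1.
Local Notation one := (ones R n).
Variable e : rel 'I_n.
Implicit Types (A : 'M[R]_n) (v : 'cV[R]_n).

Lemma wadj_lambda_max_gt0 A : is_wadj e A -> A != 0 -> 0 < lambda_max A.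
Proof.
move=> wA A0; have [[u au] _] := wadj_indefinite wA A0.
have := sym_rayleigh_max (wadj_sym wA) u; have := sqnorm_ge0 u; nra.
Qed.

Lemma wadj_lambda_min_lt0 A : is_wadj e A -> A != 0 -> lambda_min A < 0.
Proof.
move=> wA A0; have [_ [w aw]] := wadj_indefinite wA A0.
have := sym_rayleigh_min (wadj_sym wA) w; have := sqnorm_ge0 w; nra.
Qed.

Lemma wint_spectrumP A x : is_wadj e A -> A != 0 ->
  wint A x <-> (forall l, spectrum A l -> l * x <= 1).
Proof.
move=> wA A0; have [L AL] := sym_spectral_resolution (wadj_sym wA).
apply: inv_inf_sup_bounds; [exact: spectrum_has_sup AL | exact: spectrum_has_lbound AL|].
by rewrite wadj_lambda_min_lt0 ?wadj_lambda_max_gt0.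
Qed.

Lemma alphaS_mx_le_wwgf A x : is_wadj e A -> A != 0 -> wint A x ->
  ((alphaS_mx A)%:E <= wwgf A x)%E.
Proof.
move=> wA A0 /(wint_spectrumP _ wA A0) lx1.
have [L AL] := sym_spectral_resolution (wadj_sym wA); have specL := spec_res_spectrum AL.
have ge0 : {in L, forall l, 0 <= 1 - l * x} by move=> l /specL /lx1; rewrite subr_ge0.
have [[l lL [cf_gt0 w0]]|nopole] :=
  pselect (exists2 l, l \in L & 0 < spec_coef A l /\ 1 - l * x = 0).
  by rewrite (wwgf_poleE AL lL cf_gt0 w0) leey.
have nz : {in L, forall l, 0 < spec_coef A l -> 1 - l * x != 0}.
  by move=> l lL cf_gt0; apply/eqP => w0; apply: nopole; exists l.
rewrite (wwgf_finE AL nz) lee_fin; apply: ge_sup; first by case: (alphaS_mx_has_sup A).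
move=> _ [v [Sv Av0] <-]; have := sqr_inner_ones_le_resolvent AL v ge0 nz.
rewrite mulmxBl mul1mx -scalemxAl linearB linearZ /= Av0 mulr0 subr0 -/(sqnorm v) Sv.
have := sqnorm_ge0 v; have := resolvent_sum_ge0 AL ge0; nra.
Qed.

Lemma wwgf_le_alphaS_mx A : is_wadj e A -> A != 0 ->
  exists2 x, wint A x & (wwgf A x <= (alphaS_mx A)%:E)%E.
Proof.
move=> wA A0; have sA := wadj_sym wA; have [L AL] := sym_spectral_resolution sA.
have specL := spec_res_spectrum AL; have [mu Hmu] := alphaS_mx_certificate wA.
set s := alphaS_mx A; have s_gt0 : 0 < s.
  by apply: lt_le_trans (alphaS_mx_ge1 _) => //; case: wA => _ [-> _].
set x := - mu / s; set M := 1%:M - x *: A.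
have MM : M = 1%:M + (- x) *: A by rewrite /M scaleNr.
have key v : inner one v ^+ 2 <= s * inner v (M *m v).
  rewrite MM inner_affine.
  have -> : s * (1 * sqnorm v + - x * inner v (A *m v)) =
            s * sqnorm v + mu * inner v (A *m v) by rewrite /x; field; rewrite gt_eqF.
  exact: Hmu.
have lx1 l : spectrum A l -> l * x <= 1.
  move=> /(sym_eigenvector sA) [v Av v0]; have := key v.
  rewrite MM inner_affine Av linearZ /= -/(sqnorm v).
  have := mulr_gt0 s_gt0 (sqnorm_gt0 v0); have := sqr_ge0 (inner one v); nra.
have ge0 : {in L, forall l, 0 <= 1 - l * x} by move=> l /specL /lx1; rewrite subr_ge0.
have nz : {in L, forall l, 0 < spec_coef A l -> 1 - l * x != 0}.
  move=> l lL cf_gt0; apply/eqP => w0; have := key (eig_proj A l *m one).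
  rewrite MM mulmxA (mul_affine_eig_proj AL) // mulNr [x * l]mulrC w0.
  by rewrite scale0r mul0mx linear0 mulr0 leNgt exprn_gt0.
exists x; first exact/(wint_spectrumP _ wA A0).
rewrite (wwgf_finE AL nz) lee_fin -(inner_one_resolvent A L).
have := key (resolvent_one A L x); rewrite (mul_resolvent_one AL nz) innerC.
have := resolvent_sum_ge0 AL ge0; rewrite -(inner_one_resolvent A L); nra.
Qed.

Lemma wmin_alphaS_mx A : is_wadj e A -> wmin A = (alphaS_mx A)%:E.
Proof.
move=> wA; rewrite /wmin; have [->|A0] := eqVneq A 0; first by rewrite alphaS_mx0.
apply/le_anti/andP; split.
  have [x xA Wx] := wwgf_le_alphaS_mx wA A0.
  by apply: le_trans Wx; apply: ereal_inf_lbound; exists x.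
by apply/ereal_infP => _ [x xA <-]; exact: alphaS_mx_le_wwgf.
Qed.

Lemma wwgf_min_attained A : is_wadj e A -> A != 0 ->
  exists2 x, wint A x & wwgf A x = wmin A.
Proof.
move=> wA A0; have [x xA Wx] := wwgf_le_alphaS_mx wA A0.
by exists x => //; rewrite wmin_alphaS_mx //; apply/le_anti; rewrite Wx alphaS_mx_le_wwgf.
Qed.

Lemma walk_value_alphaS : walk_value R e = (alphaS R e)%:E.
Proof.
rewrite /walk_value alphaSE -ereal_inf_EFin; last 2 first.
- by exists 0 => _ [A _ <-]; exact: alphaS_mx_ge0.
- by exists (alphaS_mx (0 : 'M[R]_n)), 0; first exact: wadj0.
by rewrite image_comp; congr ereal_inf; apply: eq_imagel => A wA; exact: wmin_alphaS_mx.
Qed.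

End WalkGeneratingFunction.

Lemma image_eq_set1 (T U : Type) (P : set T) (f : T -> U) c :
  P !=set0 -> (forall x, P x -> f x = c) -> f @` P = [set c].
Proof. by move=> /set0P P0 fc; rewrite (eq_imagel fc) set_cst ifN. Qed.

(* In dimension 0 every spectrum is empty and lambda_max takes the junk value
   sup set0 = 0. *)
Section DimensionZero.
Variables (R : realType) (e : rel 'I_0).

Lemma theta_dim0 : theta R e = 0.
Proof.
rewrite /theta (@image_eq_set1 _ _ _ _ 0) ?inf1 //.
  by exists (const_mx 1); split=> [|[]] //; rewrite trmx_const.
move=> B _; rewrite /lambda_max (_ : spectrum B = set0) ?sup0 //.
by rewrite -subset0 => l /eigenvalueP [v _]; rewrite thinmx0 eqxx.
Qed.

Lemma alphaS_mx_dim0 (A : 'M[R]_0) : alphaS_mx A = 0.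
Proof.
rewrite /alphaS_mx (@image_eq_set1 _ _ _ _ 0) ?sup1 //.
  by exists 0; exact: Sn_zero_cone0.
by move=> v _; rewrite /sqnorm innerE big_ord0.
Qed.

Lemma alphaS_dim0 : alphaS R e = 0.
Proof.
rewrite alphaSE (@image_eq_set1 _ _ _ _ 0) ?inf1 //; last by move=> A _; exact: alphaS_mx_dim0.
by exists 0; first exact: wadj0.
Qed.

Lemma walk_value_dim0 : walk_value R e = 0%:E.
Proof.
rewrite /walk_value (@image_eq_set1 _ _ _ _ 0%:E) ?ereal_inf1 //.
  by exists 0; first exact: wadj0.
by move=> A _; rewrite /wmin thinmx0 eqxx.
Qed.

End DimensionZero.

Theorem theorem1 (R : realType) (n : nat) (e : rel 'I_n)
    (e_sym : symmetric e) (e_irr : irreflexive e) :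
  theta R e = alphaS R e /\
  ((alphaS R e)%:E = walk_value R e)%E /\
  (forall A : 'M[R]_n, is_wadj e A -> A != 0 ->
     exists2 x, wint A x & wwgf A x = wmin A).
Proof.
case: n e e_sym e_irr => [|n'] e _ _.
  split; first by rewrite theta_dim0 alphaS_dim0.
  split; first by rewrite alphaS_dim0 walk_value_dim0.
  by move=> A _; rewrite thinmx0 eqxx.
split; first exact: theta_eq_alphaS.
split; first by rewrite walk_value_alphaS.
exact: wwgf_min_attained.
Qed.
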